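(* In the two-project discovery model described in the context, let $\mu_1=-\mu<0\le c\mu=\mu_2$ with $\mu>0$ and $c\in[0,1)$, and let $\sigma_1<\sigma_2$. Define $$c^*:=\frac{\rho\sigma_2}{\sigma_1+2\rho\sigma_2},\qquad c^{**}:=\frac{\sigma_2}{\rho\sigma_1+2\sigma_2}.$$ Then: 1. For any $c\in(c^*,c^{**})$ there exists $\underline{\mu}$ such that discovering project 1 is better than discovering project 2 for all $\mu>\underline{\mu}$. 2. For any $c\in(c^{**},1)$ there exists $\bar\mu$ such that discovering project 2 is better than discovering project 1 for all $\mu>\bar\mu$.
   Context: Model. There are two projects $i\in\{1,2\}$. The agent's values $v=(v_1,v_2)\in\mathbb{R}^2$ are drawn from a common prior that is bivariate normal with means $\mu_1,\mu_2$, standard deviations $\sigma_1,\sigma_2>0$ and correlation $\rho\in(0,1)$. The principal has weights $w_1,w_2\in[0,1]$ with $w_1+w_2=1$. Timing: (1) the principal chooses whether to publicly discover $v_1$, $v_2$, or neither; (2) the chosen value is publicly revealed and the agent forms a posterior by Bayes' rule; (3) knowing the revealed value, the principal proposes a subset $S\subseteq\{1,2\}$; (4) the agent approves iff $\sum_{i\in S}\mathbb{E}[v_i\mid\text{revealed information}]\ge 0$; (5) the principal receives $\sum_{i\in S}w_i$ if approved and $0$ otherwise. The principal chooses the proposal to maximize her payoff given the revealed information; ''better'' means strictly higher ex-ante expected payoff for the principal. *)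

From HB Require Import structures.
From mathcomp Require Import all_boot all_order all_algebra.
From mathcomp Require Import all_classical all_reals all_analysis.
Set Implicit Arguments. Unset Strict Implicit. Unset Printing Implicit Defensive.
Import Order.TTheory GRing.Theory Num.Theory.
Local Open Scope ring_scope.

Section DiscoveryModel.
Context {R : realType}.

(* A proposal S ⊆ {1,2} is encoded by two booleans (s1, s2): i ∈ S iff s_i.
   a1, a2 are the agent's posterior means E[v_i | revealed information]. *)
Definition approves (a1 a2 : R) (s1 s2 : bool) : bool :=
  0 <= (if s1 then a1 else 0) + (if s2 then a2 else 0).

Definition proposal_payoff (w1 w2 a1 a2 : R) (s1 s2 : bool) : R :=
  if approves a1 a2 s1 s2 then (if s1 then w1 else 0) + (if s2 then w2 else 0)
  else 0.

Definition principal_value (w1 w2 a1 a2 : R) : R :=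
  Num.max (Num.max (proposal_payoff w1 w2 a1 a2 false false)
                   (proposal_payoff w1 w2 a1 a2 true false))
          (Num.max (proposal_payoff w1 w2 a1 a2 false true)
                   (proposal_payoff w1 w2 a1 a2 true true)).

(* Bayes posterior mean of v_j given v_i = x, for the bivariate normal prior
   with means mu_i, mu_j, std devs sig_i, sig_j and correlation rho. *)
Definition posterior_mean_other (mu_i sig_i mu_j sig_j rho x : R) : R :=
  mu_j + rho * (sig_j / sig_i) * (x - mu_i).

(* Ex-ante expected payoff of discovering v_1: v_1 ~ N(mu1, sig1^2) (its prior
   marginal); after seeing v_1 = x the posterior means are (x, E[v_2 | x]). *)
Definition payoff_discover1 (mu1 mu2 sig1 sig2 rho w1 w2 : R) : \bar R :=
  (\int[normal_prob mu1 sig1]_x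
     (principal_value w1 w2 x (posterior_mean_other mu1 sig1 mu2 sig2 rho x))%:E)%E.

Definition payoff_discover2 (mu1 mu2 sig1 sig2 rho w1 w2 : R) : \bar R :=
  (\int[normal_prob mu2 sig2]_y
     (principal_value w1 w2 (posterior_mean_other mu2 sig2 mu1 sig1 rho y) y)%:E)%E.

Definition c_star (sig1 sig2 rho : R) : R := rho * sig2 / (sig1 + 2 * rho * sig2).
Definition c_starstar (sig1 sig2 rho : R) : R := sig2 / (rho * sig1 + 2 * sig2).

End DiscoveryModel.

From HB Require Import structures.
From mathcomp Require Import all_boot all_order all_algebra.
From mathcomp Require Import all_classical all_reals all_analysis.
From mathcomp Require Import measurable_realfun.
From mathcomp Require Import ring lra.
Set Implicit Arguments. Unset Strict Implicit. Unset Printing Implicit Defensive.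
Import Order.TTheory GRing.Theory Num.Theory.
Local Open Scope classical_set_scope.
Local Open Scope ring_scope.

(* Proposing project 1 alone is never necessary, so each ex-ante payoff is
   w2 * P(project 2 is approvable) + w1 * P(both projects are approvable).  As mu grows, each of
   these four probabilities is within a Gaussian tail exp(-(g mu)^2/2) of 0 or 1, where g mu is
   the distance, in standard deviations, from the mean of the discovered value to the approval
   threshold:
     discovering v1: project 2 fails at rate c/(rho sig2), both pass at rate (1-c)/(sig1+rho sig2);
     discovering v2: project 2 fails at rate c/sig2,       both pass at rate (1-c)/(sig2+rho sig1).
   The comparison is decided by the slowest of these tails: c/sig2, which favours discovering v1,
   when 0 < c < c**, and (1-c)/(sig2+rho sig1), which favours discovering v2, when c > c**. *)

Lemma ltr_pdiv_cross {F : numFieldType} (a b c d : F) : 0 < b -> 0 < d ->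
  (a / b < c / d) = (a * d < c * b).
Proof. by move=> b0 d0; rewrite ltr_pdivrMr // mulrAC ltr_pdivlMr. Qed.

Section Gauss.
Context {R : realType}.
Implicit Types a b c t : R.

Definition gauss t : R := expR (- t ^+ 2 / 2).

Lemma gauss_gt0 t : 0 < gauss t.
Proof. exact: expR_gt0. Qed.

Lemma gauss_ge0 t : 0 <= gauss t.
Proof. exact: expR_ge0. Qed.

Lemma gauss_le a b : b ^+ 2 <= a ^+ 2 -> gauss a <= gauss b.
Proof. by move=> ab; rewrite ler_expR ler_pM2r // lerN2. Qed.

Lemma gauss_le_mul a b c : b ^+ 2 + c ^+ 2 <= a ^+ 2 -> gauss a <= gauss b * gauss c.
Proof. by move=> abc; rewrite -expRD ler_expR; lra. Qed.

Lemma gauss_ratio_lt (K1 K2 a b : R) : 0 <= K1 -> 0 < K2 ->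
  K1 / K2 < (a ^+ 2 - b ^+ 2) / 2 -> K1 * gauss a < K2 * gauss b.
Proof.
move=> K1ge0 K2gt0; set q := (a ^+ 2 - b ^+ 2) / 2; rewrite ltr_pdivrMr // => Kq.
have -> : gauss a = expR (- q) * gauss b by rewrite -expRD; congr expR; rewrite /q; field.
rewrite mulrA ltr_pM2r ?gauss_gt0 // expRN ltr_pdivrMr ?expR_gt0 //.
by have := ler_wpM2l (ltW K2gt0) (expR_ge1Dx q); lra.
Qed.

Lemma quadratic_eventually_gt0 a b c : 0 < a ->
  exists M, forall x, M < x -> 0 < a * x ^+ 2 + b * x + c.
Proof.
move=> a0; exists (1 + (`|b| + `|c|) / a) => x xM.
have x1 : 1 < x by have := divr_ge0 (addr_ge0 (normr_ge0 b) (normr_ge0 c)) (ltW a0); lra.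
have ax : `|b| + `|c| < a * (x - 1) by rewrite mulrC -ltr_pdivrMr //; lra.
have := ler_norm (- b); have := ler_norm (- c); rewrite !normrN => nb nc.
have : (`|b| + `|c|) * x < a * (x - 1) * x by rewrite ltr_pM2r //; lra.
have : - b * x <= `|b| * x by rewrite ler_pM2r //; lra.
have : `|c| <= `|c| * x by rewrite ler_peMr //; lra.
nra.
Qed.

Lemma gauss_lt_eventually (K1 K2 g1 g2 h : R) : 0 <= g2 -> g2 < g1 -> 0 <= K1 -> 0 < K2 ->
  exists M, forall mu, M < mu -> K1 * gauss (g1 * mu) < K2 * gauss (g2 * mu + h).
Proof.
move=> g2ge0 g21 K1ge0 K2gt0.
have [|M HM] := @quadratic_eventually_gt0 ((g1 ^+ 2 - g2 ^+ 2) / 2) (- (g2 * h))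
  (- (h ^+ 2 / 2) - K1 / K2).
  by apply: divr_gt0 => //; nra.
exists M => mu /HM ?; apply: gauss_ratio_lt => //; lra.
Qed.

Lemma gauss_sum_lt_eventually (K1 K2 K g1 g2 g h : R) :
  0 <= g -> g < g1 -> g < g2 -> 0 <= K1 -> 0 <= K2 -> 0 < K ->
  exists M, forall mu, M < mu ->
    K1 * gauss (g1 * mu) + K2 * gauss (g2 * mu) < K * gauss (g * mu + h).
Proof.
move=> g0 gg1 gg2 K1ge0 K2ge0 K0.
have K20 : 0 < K / 2 by rewrite divr_gt0.
have [M1 HM1] := gauss_lt_eventually h g0 gg1 K1ge0 K20.
have [M2 HM2] := gauss_lt_eventually h g0 gg2 K2ge0 K20.
exists (Num.max M1 M2) => mu; rewrite gt_max => /andP[/HM1 ? /HM2 ?]; lra.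
Qed.
End Gauss.

Section RealProbability.
Context d (T : measurableType d) {R : realType} (P : probability T R).
Implicit Types A : set T.

Definition pr A : R := fine (P A).

Lemma prE A : measurable A -> P A = (pr A)%:E.
Proof.
move=> mA; rewrite /pr fineK // ge0_fin_numE ?measure_ge0 //.
exact: le_lt_trans (probability_le1 P mA) (ltry _).
Qed.

Lemma pr_ge0 A : 0 <= pr A.
Proof. exact/fine_ge0/measure_ge0. Qed.

Lemma pr_le1 A : measurable A -> pr A <= 1.
Proof. by move=> mA; rewrite -lee_fin -prE // probability_le1. Qed.

Lemma pr_setC A : measurable A -> pr (~` A) = 1 - pr A.
Proof. by move=> mA; rewrite /pr probability_setC // prE. Qed.

Lemma integral_if_add (a b : R) (p q : T -> bool) : 0 <= a -> 0 <= b ->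
  measurable [set x | p x] -> measurable [set x | q x] ->
  (\int[P]_x ((if p x then a else 0) + (if q x then b else 0))%:E
   = (a * pr [set x | p x] + b * pr [set x | q x])%:E)%E.
Proof.
move=> a0 b0 mp mq.
transitivity (\int[P]_x ((a * \1_[set x | p x] x)%:E + (b * \1_[set x | q x] x)%:E))%E.
  apply: eq_integral => x _.
  have memE (r : T -> bool) : (x \in [set y | r y]) = r x.
    by apply/idP/idP => [/set_mem|/mem_set].
  by rewrite !indicE !memE -EFinD; case: (p x); case: (q x); rewrite ?mulr1 ?mulr0.
have mind (c : R) (B : set T) :
    measurable B -> measurable_fun [set: T] (fun x : T => (c * \1_B x)%:E).
  by move=> mB; apply/measurable_EFinP/measurable_funM => //; exact: measurable_indic.
rewrite ge0_integralD //; try by [move=> x _; rewrite lee_fin mulr_ge0 | exact: mind].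
under eq_integral do rewrite EFinM.
under [X in (_ + X)%E]eq_integral do rewrite EFinM.
rewrite !ge0_integralZl_EFin //;
  try by [move=> x _; rewrite lee_fin | exact/measurable_EFinP/measurable_indic].
by rewrite !integral_indic // !setIT EFinD !EFinM -!prE.
Qed.

End RealProbability.

Section NormalTails.
Context {R : realType}.
Variable s : R.
Hypothesis s0 : 0 < s.
Implicit Types (m t : R) (A : set R).

Lemma normal_pdf_gauss m x : normal_pdf m s x = normal_peak s * gauss ((x - m) / s).
Proof.
rewrite normal_pdfE ?gt_eqF //= /normal_fun /gauss; congr (_ * expR _).
by rewrite -mulr_natr; field; rewrite gt_eqF.
Qed.

Lemma measurable_normal_pdf_EFin m A : measurable_fun A (fun x => (normal_pdf m s x)%:E).
Proof. by apply: measurable_funTS; apply/measurable_EFinP; exact: measurable_normal_pdf. Qed.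

(* On [A] the density of mean [m] is at most [gauss (d / s)] times the density of mean [m'],
   whose total mass is at most one. *)
Lemma normal_prob_le_shift m m' d A : measurable A ->
  (forall x, A x -> (x - m') ^+ 2 + d ^+ 2 <= (x - m) ^+ 2) ->
  (normal_prob m s A <= (gauss (d / s))%:E)%E.
Proof.
move=> mA Hshift.
apply: (@le_trans _ _ (\int[lebesgue_measure]_(x in A)
  ((gauss (d / s))%:E * (normal_pdf m' s x)%:E))%E).
  apply: ge0_le_integral => //.
  - by move=> x _; rewrite lee_fin normal_pdf_ge0.
  - exact: measurable_normal_pdf_EFin.
  - by apply: emeasurable_funM => //; exact: measurable_normal_pdf_EFin.
  move=> x Ax; rewrite -EFinM lee_fin !normal_pdf_gauss mulrCA ler_wpM2l ?normal_peak_ge0 //.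
  apply: gauss_le_mul; rewrite addrC !expr_div_n -mulrDl ler_pM2r ?invr_gt0 ?exprn_gt0 //.
  exact: Hshift.
rewrite ge0_integralZl_EFin ?gauss_ge0 //; last 2 first.
- by move=> x _; rewrite lee_fin normal_pdf_ge0.
- exact: measurable_normal_pdf_EFin.
rewrite -[leRHS]mule1 lee_pmul2l ?lte_fin ?gauss_gt0 //.
exact: (probability_le1 (normal_prob m' s) mA).
Qed.

Lemma normal_prob_ge_itv m a D A : measurable A -> `[a, a + 1] `<=` A ->
  (forall x, a <= x <= a + 1 -> (x - m) ^+ 2 <= D ^+ 2) ->
  ((normal_peak s * gauss (D / s))%:E <= normal_prob m s A)%E.
Proof.
move=> mA sub Hsq.
apply: (@le_trans _ _ (normal_prob m s `[a, a + 1])); last first.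
  by apply: le_measure => //; rewrite inE.
have -> : (normal_peak s * gauss (D / s))%:E
    = (\int[lebesgue_measure]_(x in `[a, (a + 1)%R]) (normal_peak s * gauss (D / s))%:E)%E.
  rewrite integral_cst //= lebesgue_measure_itv /= lte_fin ltrDl ltr01.
  by rewrite -EFinD addrAC subrr add0r mule1.
apply: ge0_le_integral => //.
- by move=> x _; rewrite lee_fin mulr_ge0 ?normal_peak_ge0 ?gauss_ge0.
- exact: measurable_normal_pdf_EFin.
move=> x /=; rewrite in_itv /= => ax.
rewrite lee_fin normal_pdf_gauss ler_wpM2l ?normal_peak_ge0 //.
by apply: gauss_le; rewrite !expr_div_n ler_pM2r ?invr_gt0 ?exprn_gt0 //; exact: Hsq.
Qed.

Lemma pr_normal_right_le m t A : measurable A -> 0 <= t ->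
  (forall x, A x -> m + t * s <= x) -> pr (normal_prob m s) A <= gauss t.
Proof.
move=> mA t0 HA; rewrite -lee_fin -prE // -[t](mulfK (lt0r_neq0 s0)).
have ts0 : 0 <= t * s := mulr_ge0 t0 (ltW s0).
by apply: (normal_prob_le_shift (m' := m + t * s)) => // x /HA; nra.
Qed.

Lemma pr_normal_left_le m t A : measurable A -> 0 <= t ->
  (forall x, A x -> x <= m - t * s) -> pr (normal_prob m s) A <= gauss t.
Proof.
move=> mA t0 HA; rewrite -lee_fin -prE // -[t](mulfK (lt0r_neq0 s0)).
have ts0 : 0 <= t * s := mulr_ge0 t0 (ltW s0).
by apply: (normal_prob_le_shift (m' := m - t * s)) => // x /HA; nra.
Qed.

Lemma pr_normal_right_ge m t A : measurable A -> 0 <= t ->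
  (forall x, m + t * s <= x -> A x) ->
  normal_peak s * gauss (t + s^-1) <= pr (normal_prob m s) A.
Proof.
move=> mA t0 HA; rewrite -lee_fin -prE //.
have -> : t + s^-1 = (t * s + 1) / s by field; rewrite gt_eqF.
have ts0 : 0 <= t * s := mulr_ge0 t0 (ltW s0).
apply: (normal_prob_ge_itv (a := m + t * s)) => //.
  by move=> x /=; rewrite in_itv /= => /andP[+ _]; exact: HA.
by move=> x /andP[? ?]; nra.
Qed.

Lemma pr_normal_left_ge m t A : measurable A -> 0 <= t ->
  (forall x, x <= m - t * s -> A x) ->
  normal_peak s * gauss (t + s^-1) <= pr (normal_prob m s) A.
Proof.
move=> mA t0 HA; rewrite -lee_fin -prE //.
have -> : t + s^-1 = (t * s + 1) / s by field; rewrite gt_eqF.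
have ts0 : 0 <= t * s := mulr_ge0 t0 (ltW s0).
apply: (normal_prob_ge_itv (a := m - t * s - 1)) => //.
  by move=> x /=; rewrite in_itv /= => /andP[_ ?]; apply: HA; lra.
by move=> x /andP[? ?]; nra.
Qed.

End NormalTails.

Section Payoffs.
Context {R : realType}.

Lemma max4_eq (a b c d t : R) : a <= t -> b <= t -> c <= t -> d <= t ->
  a = t \/ b = t \/ c = t \/ d = t -> Num.max (Num.max a b) (Num.max c d) = t.
Proof.
move=> ta tb tc td H; apply/eqP; rewrite eq_le !ge_max ta tb tc td /= !le_max.
by case: H => [->|[->|[->|->]]]; rewrite lexx ?orbT.
Qed.

Lemma principal_valueE (w1 w2 u v : R) : 0 <= w1 -> 0 <= w2 -> w1 + w2 = 1 ->
  (0 <= u -> 0 <= v) ->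
  principal_value w1 w2 u v = (if 0 <= v then w2 else 0) + (if 0 <= u + v then w1 else 0).
Proof.
move=> w10 w20 w12 uv.
rewrite /principal_value /proposal_payoff /approves /= !add0r !addr0 lexx.
have [v0|v0] := lerP 0 v; have [uv0|uv0] := lerP 0 (u + v); have [u0|u0] := lerP 0 u;
  apply: max4_eq; try lra; by have := uv u0; lra.
Qed.

Lemma measurable_nonneg (f : R -> R) : measurable_fun setT f -> measurable [set x | 0 <= f x].
Proof.
move=> mf; have := mf measurableT `[0, +oo[%classic (measurable_itv _).
by rewrite setTI; congr measurable; apply/seteqP; split => x /=; rewrite in_itv /= andbT.
Qed.

Lemma measurable_posterior_mean_other (mu_i sig_i mu_j sig_j rho : R) :
  measurable_fun setT (posterior_mean_other mu_i sig_i mu_j sig_j rho).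
Proof. by apply: measurable_funD => //; apply: measurable_funM => //; exact: measurable_funB. Qed.

Lemma payoff_discover1E (mu1 mu2 sig1 sig2 rho w1 w2 : R) :
  0 <= w1 -> 0 <= w2 -> w1 + w2 = 1 ->
  let post := posterior_mean_other mu1 sig1 mu2 sig2 rho in
  (forall x, 0 <= x -> 0 <= post x) ->
  payoff_discover1 mu1 mu2 sig1 sig2 rho w1 w2 =
  (w2 * pr (normal_prob mu1 sig1) [set x | 0 <= post x]
   + w1 * pr (normal_prob mu1 sig1) [set x | 0 <= x + post x])%:E.
Proof.
move=> w10 w20 w12 post Hpost; rewrite /payoff_discover1.
under eq_integral => x _ do rewrite (principal_valueE w10 w20 w12 (Hpost x)).
apply: integral_if_add => //; apply: measurable_nonneg.
  exact: measurable_posterior_mean_other.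
by apply: measurable_funD => //; exact: measurable_posterior_mean_other.
Qed.

Lemma payoff_discover2E (mu1 mu2 sig1 sig2 rho w1 w2 : R) :
  0 <= w1 -> 0 <= w2 -> w1 + w2 = 1 ->
  let post := posterior_mean_other mu2 sig2 mu1 sig1 rho in
  (forall y, 0 <= post y -> 0 <= y) ->
  payoff_discover2 mu1 mu2 sig1 sig2 rho w1 w2 =
  (w2 * pr (normal_prob mu2 sig2) [set y | 0 <= y]
   + w1 * pr (normal_prob mu2 sig2) [set y | 0 <= post y + y])%:E.
Proof.
move=> w10 w20 w12 post Hpost; rewrite /payoff_discover2.
under eq_integral => y _ do rewrite (principal_valueE w10 w20 w12 (Hpost y)).
apply: integral_if_add => //; apply: measurable_nonneg => //.
by apply: measurable_funD => //; exact: measurable_posterior_mean_other.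
Qed.

End Payoffs.

Section LargeMeanGap.
Context {R : realType}.
Variables (sig1 sig2 rho w1 w2 c : R).
Hypotheses (hsig1 : 0 < sig1) (hsig12 : sig1 < sig2) (hrho0 : 0 < rho) (hrho1 : rho < 1).
Hypotheses (hw1 : 0 < w1) (hw2 : 0 < w2) (hw : w1 + w2 = 1) (hc0 : 0 <= c) (hc1 : c < 1).

Let hsig2 : 0 < sig2. Proof. exact: lt_trans hsig12. Qed.
Let h1c : 0 <= 1 - c. Proof. by rewrite subr_ge0 ltW. Qed.
Let k1 := rho * (sig2 / sig1).
Let k2 := rho * (sig1 / sig2).
Let hk1 : 0 < k1. Proof. by rewrite mulr_gt0 ?divr_gt0. Qed.
Let hk2 : 0 < k2. Proof. by rewrite mulr_gt0 ?divr_gt0. Qed.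

Let post1 mu := posterior_mean_other (- mu) sig1 (c * mu) sig2 rho.
Let post2 mu := posterior_mean_other (c * mu) sig2 (- mu) sig1 rho.
Let Pr1 mu := pr (normal_prob (- mu) sig1).
Let Pr2 mu := pr (normal_prob (c * mu) sig2).
Let A1 mu := [set x | 0 <= post1 mu x].
Let B1 mu := [set x | 0 <= x + post1 mu x].
Let A2 := [set y : R | 0 <= y].
Let B2 mu := [set y | 0 <= post2 mu y + y].

(* After discovering [v_i], [A_i] is the event that project 2 is approvable and [B_i] the event
   that both projects together are. *)
Let measurable_A1 mu : measurable (A1 mu).
Proof. by apply: measurable_nonneg; exact: measurable_posterior_mean_other. Qed.
Let measurable_B1 mu : measurable (B1 mu).
Proof.
by apply: measurable_nonneg; apply: measurable_funD => //; exact: measurable_posterior_mean_other.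
Qed.
Let measurable_A2 : measurable A2.
Proof. exact: measurable_nonneg. Qed.
Let measurable_B2 mu : measurable (B2 mu).
Proof.
by apply: measurable_nonneg; apply: measurable_funD => //; exact: measurable_posterior_mean_other.
Qed.

Let payoff_discover1_gap mu : 0 < mu ->
  payoff_discover1 (- mu) (c * mu) sig1 sig2 rho w1 w2
  = (w2 * Pr1 mu (A1 mu) + w1 * Pr1 mu (B1 mu))%:E.
Proof.
move=> mu0; apply: payoff_discover1E; rewrite ?ltW // => x x0.
rewrite /posterior_mean_other opprK -/k1.
have := mulr_ge0 hc0 (ltW mu0); have := mulr_ge0 (ltW hk1) (addr_ge0 x0 (ltW mu0)); lra.
Qed.

Let payoff_discover2_gap mu : 0 < mu ->
  payoff_discover2 (- mu) (c * mu) sig1 sig2 rho w1 w2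
  = (w2 * Pr2 mu A2 + w1 * Pr2 mu (B2 mu))%:E.
Proof.
move=> mu0; apply: payoff_discover2E; rewrite ?ltW // => y.
rewrite /posterior_mean_other -/k2 => hy.
rewrite leNgt; apply/negP => y0.
have : k2 * (y - c * mu) < 0 by rewrite pmulr_rlt0 //; have := mulr_ge0 hc0 (ltW mu0); lra.
lra.
Qed.

Let prA1C_le mu : 0 < mu -> 1 - Pr1 mu (A1 mu) <= gauss (c / (rho * sig2) * mu).
Proof.
move=> mu0; rewrite -(pr_setC (normal_prob (- mu) sig1) (measurable_A1 mu)).
set t := c / (rho * sig2) * mu.
have t0 : 0 <= t := mulr_ge0 (divr_ge0 hc0 (ltW (mulr_gt0 hrho0 hsig2))) (ltW mu0).
have kt : k1 * (t * sig1) = c * mu by rewrite /k1 /t; field; rewrite !gt_eqF.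
apply: (pr_normal_left_le hsig1) => // [|x /negP]; first exact: measurableC.
rewrite -ltNge /post1 /posterior_mean_other opprK -/k1 => hx.
have := hk1; nra.
Qed.

Let prB1_le mu : 0 < mu -> Pr1 mu (B1 mu) <= gauss ((1 - c) / (sig1 + rho * sig2) * mu).
Proof.
move=> mu0; set t := (1 - c) / (sig1 + rho * sig2) * mu.
have t0 : 0 <= t := mulr_ge0 (divr_ge0 h1c (ltW (addr_gt0 hsig1 (mulr_gt0 hrho0 hsig2))))
  (ltW mu0).
have kt : (1 + k1) * (t * sig1) = (1 - c) * mu.
  by rewrite /k1 /t; field; rewrite !gt_eqF ?addr_gt0 ?mulr_gt0.
apply: (pr_normal_right_le hsig1) => // x.
rewrite /B1 /post1 /posterior_mean_other opprK -/k1 /= => hx.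
have := hk1; nra.
Qed.

Let prA2C_le mu : 0 < mu -> 1 - Pr2 mu A2 <= gauss (c / sig2 * mu).
Proof.
move=> mu0; rewrite -(pr_setC (normal_prob (c * mu) sig2) measurable_A2).
have t0 : 0 <= c / sig2 * mu := mulr_ge0 (divr_ge0 hc0 (ltW hsig2)) (ltW mu0).
apply: (pr_normal_left_le hsig2) => // [|y /negP]; first exact: measurableC.
have -> : c / sig2 * mu * sig2 = c * mu by field; rewrite gt_eqF.
by rewrite -ltNge; lra.
Qed.

Let prA2C_ge mu : 0 < mu ->
  normal_peak sig2 * gauss (c / sig2 * mu + 2 / sig2) <= 1 - Pr2 mu A2.
Proof.
move=> mu0; rewrite -(pr_setC (normal_prob (c * mu) sig2) measurable_A2).
set t := c / sig2 * mu + 1 / sig2.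
have t0 : 0 <= t := addr_ge0 (mulr_ge0 (divr_ge0 hc0 (ltW hsig2)) (ltW mu0))
  (divr_ge0 ler01 (ltW hsig2)).
have -> : c / sig2 * mu + 2 / sig2 = t + sig2^-1 by rewrite /t; field; rewrite gt_eqF.
apply: (pr_normal_left_ge hsig2) => // [|y]; first exact: measurableC.
have -> : t * sig2 = c * mu + 1 by rewrite /t; field; rewrite gt_eqF.
by move=> hy /=; rewrite /A2 /=; lra.
Qed.

Let B2_iff mu y : B2 mu y <-> c * mu + (1 - c) / (sig2 + rho * sig1) * mu * sig2 <= y.
Proof.
have kt : (1 + k2) * ((1 - c) / (sig2 + rho * sig1) * mu * sig2) = (1 - c) * mu.
  by rewrite /k2; field; rewrite !gt_eqF ?addr_gt0 ?mulr_gt0.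
rewrite /B2 /post2 /posterior_mean_other -/k2 /=; have := hk2.
by split => hy; nra.
Qed.

Let B2_rate_ge0 mu : 0 < mu -> 0 <= (1 - c) / (sig2 + rho * sig1) * mu.
Proof.
by move=> mu0; exact: mulr_ge0 (divr_ge0 h1c (ltW (addr_gt0 hsig2 (mulr_gt0 hrho0 hsig1))))
  (ltW mu0).
Qed.

Let prB2_le mu : 0 < mu ->
  Pr2 mu (B2 mu) <= gauss ((1 - c) / (sig2 + rho * sig1) * mu).
Proof.
by move=> mu0; apply: (pr_normal_right_le hsig2) => // [|y /B2_iff]; first exact: B2_rate_ge0.
Qed.

Let prB2_ge mu : 0 < mu ->
  normal_peak sig2 * gauss ((1 - c) / (sig2 + rho * sig1) * mu + sig2^-1) <= Pr2 mu (B2 mu).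
Proof.
by move=> mu0; apply: (pr_normal_right_ge hsig2) => // [|y /B2_iff]; first exact: B2_rate_ge0.
Qed.

Lemma discover1_better : 0 < c -> c < c_starstar sig1 sig2 rho ->
  exists M, forall mu, 0 < mu -> M < mu ->
    (payoff_discover2 (- mu) (c * mu) sig1 sig2 rho w1 w2
     < payoff_discover1 (- mu) (c * mu) sig1 sig2 rho w1 w2)%E.
Proof.
move=> c0; rewrite /c_starstar ltr_pdivlMr ?addr_gt0 ?mulr_gt0 // => css.
have pk0 : 0 < normal_peak sig2 by rewrite normal_peak_gt0 ?gt_eqF.
have g0 : 0 <= c / sig2 := divr_ge0 hc0 (ltW hsig2).
have g1 : c / sig2 < c / (rho * sig2).
  rewrite ltr_pdiv_cross ?mulr_gt0 ?hsig2 //.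
  have : 0 < c * sig2 * (1 - rho) by rewrite !mulr_gt0 ?hsig2 ?subr_gt0.
  lra.
have g2 : c / sig2 < (1 - c) / (sig2 + rho * sig1).
  by rewrite ltr_pdiv_cross ?addr_gt0 ?mulr_gt0 ?hsig2 //; lra.
have [M HM] := gauss_sum_lt_eventually (2 / sig2) g0 g1 g2 (ltW hw2) (ltW hw1)
  (mulr_gt0 hw2 pk0).
exists M => mu mu0 /HM lt_tails.
rewrite payoff_discover1_gap // payoff_discover2_gap // lte_fin.
have := ler_wpM2l (ltW hw2) (prA1C_le mu0).
have := ler_wpM2l (ltW hw1) (prB2_le mu0).
have := ler_wpM2l (ltW hw2) (prA2C_ge mu0).
have : 0 <= w1 * Pr1 mu (B1 mu) := mulr_ge0 (ltW hw1) (pr_ge0 _ _).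
lra.
Qed.

Lemma discover2_better : c_starstar sig1 sig2 rho < c ->
  exists M, forall mu, 0 < mu -> M < mu ->
    (payoff_discover1 (- mu) (c * mu) sig1 sig2 rho w1 w2
     < payoff_discover2 (- mu) (c * mu) sig1 sig2 rho w1 w2)%E.
Proof.
rewrite /c_starstar ltr_pdivrMr ?addr_gt0 ?mulr_gt0 // => css.
have pk0 : 0 < normal_peak sig2 by rewrite normal_peak_gt0 ?gt_eqF.
have g0 : 0 <= (1 - c) / (sig2 + rho * sig1).
  exact: divr_ge0 h1c (ltW (addr_gt0 hsig2 (mulr_gt0 hrho0 hsig1))).
have g1 : (1 - c) / (sig2 + rho * sig1) < c / sig2.
  by rewrite ltr_pdiv_cross ?addr_gt0 ?mulr_gt0 ?hsig2 //; lra.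
have g2 : (1 - c) / (sig2 + rho * sig1) < (1 - c) / (sig1 + rho * sig2).
  rewrite ltr_pdiv_cross ?addr_gt0 ?mulr_gt0 ?hsig2 //.
  have : 0 < (1 - c) * ((1 - rho) * (sig2 - sig1)) by rewrite !mulr_gt0 ?subr_gt0.
  lra.
have [M HM] := gauss_sum_lt_eventually sig2^-1 g0 g1 g2 (ltW hw2) (ltW hw1)
  (mulr_gt0 hw1 pk0).
exists M => mu mu0 /HM lt_tails.
rewrite payoff_discover1_gap // payoff_discover2_gap // lte_fin.
have := ler_wpM2l (ltW hw2) (prA2C_le mu0).
have := ler_wpM2l (ltW hw1) (prB1_le mu0).
have := ler_wpM2l (ltW hw1) (prB2_ge mu0).
have : w2 * Pr1 mu (A1 mu) <= w2 * 1 :=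
  ler_wpM2l (ltW hw2) (pr_le1 (normal_prob (- mu) sig1) (measurable_A1 mu)).
lra.
Qed.

End LargeMeanGap.

Theorem lemma1 (R : realType) (sig1 sig2 rho w1 w2 c : R)
  (hsig1 : 0 < sig1) (hsig12 : sig1 < sig2)
  (hrho0 : 0 < rho) (hrho1 : rho < 1)
  (hw1 : 0 < w1) (hw2 : 0 < w2) (hw : w1 + w2 = 1)
  (hc0 : 0 <= c) (hc1 : c < 1) :
  (c_star sig1 sig2 rho < c < c_starstar sig1 sig2 rho ->
     exists mu_low : R, forall mu : R, 0 < mu -> mu_low < mu ->
       (payoff_discover2 (- mu) (c * mu) sig1 sig2 rho w1 w2
          < payoff_discover1 (- mu) (c * mu) sig1 sig2 rho w1 w2)%E)
  /\
  (c_starstar sig1 sig2 rho < c ->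
     exists mu_bar : R, forall mu : R, 0 < mu -> mu_bar < mu ->
       (payoff_discover1 (- mu) (c * mu) sig1 sig2 rho w1 w2
          < payoff_discover2 (- mu) (c * mu) sig1 sig2 rho w1 w2)%E).
Proof.
split; last by move=> css; apply: discover2_better.
move=> /andP[cs css]; apply: discover1_better => //.
have sig2_gt0 : 0 < sig2 by exact: lt_trans hsig12.
have : 0 < c_star sig1 sig2 rho by apply: divr_gt0; nra.
lra.
Qed.
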